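(* Let $H$ be a Hopf algebra over a field $k$, $(d,\Omega)$ a left-covariant FODC over $H$, and $X\in\Omega^\ast=\operatorname{Hom}_{-H}(\Omega,H)$ with $\rho(X)(a)=X(da)$. Consider the conditions (A) $\rho(X)=(I\otimes\varepsilon)\circ(I\otimes\rho(X))\circ\Delta$, i.e. $\rho(X)(a)=\sum a_1\,\varepsilon(\rho(X)(a_2))$ for all $a\in H$; (B) $\rho(X)\circ L=L\circ\rho(X)$ for every left translation $L$ of $H$. Then (A) implies (B). If moreover $\operatorname{Alg}(H,k)$ separates the elements of $H$ (for all $a\neq b$ in $H$ there is $\varphi\in\operatorname{Alg}(H,k)$ with $\varphi(a)\neq\varphi(b)$), then (B) implies (A), so (A) and (B) are equivalent.
   Context: A FODC over $H$ is a pair $(d,\Omega)$ with $\Omega$ an $H$-bimodule, $d\colon H\to\Omega$ a derivation, and $\Omega$ generated as bimodule by $d(H)$; left-covariant means there is $\Delta_l\colon\Omega\to H\otimes\Omega$ with $\Delta_l\circ d=(I\otimes d)\circ\Delta$ and $(\varepsilon\otimes I)\circ\Delta_l=I$. A left translation on $H$ is an algebra homomorphism $L\colon H\to H$ with $\Delta\circ L=(L\otimes I)\circ\Delta$; these are exactly the maps $(\varphi\otimes I)\circ\Delta$ with $\varphi\in\operatorname{Alg}(H,k)$, the unital algebra homomorphisms $H\to k$. *)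

(* Elements of a tensor product U (x) V are
   represented by finite sums of simple tensors (seq (U * V)); two such
   representations denote the same tensor iff every bilinear map out of
   U * V (into any k-vector space) takes the same value on them
   (universal property of the tensor product). *)
From HB Require Import structures.
From mathcomp Require Import all_boot all_order all_algebra.
Set Implicit Arguments. Unset Strict Implicit. Unset Printing Implicit Defensive.
Import Order.TTheory GRing.Theory Num.Theory.
Local Open Scope ring_scope.

Section Tensors.
Variable k : fieldType.

Definition klin (U V : lmodType k) (f : U -> V) : Prop :=
  forall (c : k) (x y : U), f (c *: x + y) = c *: f x + f y.

Definition kform (U : lmodType k) (f : U -> k) : Prop :=
  forall (c : k) (x y : U), f (c *: x + y) = c * f x + f y.

Definition bilin (U V W : lmodType k) (f : U -> V -> W) : Prop :=
  (forall y, klin (fun x => f x y)) /\ (forall x, klin (f x)).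

Definition trilin (U V Z W : lmodType k) (f : U -> V -> Z -> W) : Prop :=
  (forall y z, klin (fun x => f x y z)) /\ (forall x z, klin (fun y => f x y z))
  /\ (forall x y, klin (f x y)).

Definition tev (U V W : lmodType k) (f : U -> V -> W) (t : seq (U * V)) : W :=
  \sum_(p <- t) f p.1 p.2.

Definition tensor_eq (U V : lmodType k) (t1 t2 : seq (U * V)) : Prop :=
  forall (W : lmodType k) (f : U -> V -> W), bilin f -> tev f t1 = tev f t2.

(* a k-linear map U -> V (x) Z, given by representatives *)
Definition tlin (U V Z : lmodType k) (D : U -> seq (V * Z)) : Prop :=
  forall (c : k) (x y : U),
    tensor_eq (D (c *: x + y)) ([seq (c *: p.1, p.2) | p <- D x] ++ D y).

End Tensors.

Section Hopf.
Variables (k : fieldType) (H : algType k).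

Definition alg_hom_k (phi : H -> k) : Prop :=
  kform phi /\ (forall x y, phi (x * y) = phi x * phi y) /\ phi 1 = 1.

Definition is_hopf (cop : H -> seq (H * H)) (eps : H -> k) : Prop :=
  tlin cop /\
      (forall x y, tensor_eq (cop (x * y))
                     [seq (p.1 * q.1, p.2 * q.2) | p <- cop x, q <- cop y]) /\
      tensor_eq (cop 1) [:: (1, 1)] /\
      (* coassociativity (Delta (x) I) Delta = (I (x) Delta) Delta *)
      (forall (W : lmodType k) (f : H -> H -> H -> W), trilin f ->
         forall a, \sum_(p <- cop a) \sum_(q <- cop p.1) f q.1 q.2 p.2
                 = \sum_(p <- cop a) \sum_(q <- cop p.2) f p.1 q.1 q.2) /\
      alg_hom_k eps /\
      (forall a, \sum_(p <- cop a) eps p.1 *: p.2 = a) /\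
      (forall a, \sum_(p <- cop a) eps p.2 *: p.1 = a) /\
      exists S : H -> H, klin S /\
        (forall a, \sum_(p <- cop a) S p.1 * p.2 = eps a *: 1) /\
        (forall a, \sum_(p <- cop a) p.1 * S p.2 = eps a *: 1).

Definition left_translation (cop : H -> seq (H * H)) (L : H -> H) : Prop :=
  [/\ klin L, (forall x y, L (x * y) = L x * L y), L 1 = 1 &
      forall a, tensor_eq (cop (L a)) [seq (L p.1, p.2) | p <- cop a]].

Definition is_FODC (Omega : lmodType k) (la : H -> Omega -> Omega)
    (ra : Omega -> H -> Omega) (d : H -> Omega) : Prop :=
      (bilin la /\ bilin ra) /\
      (forall x y w, la (x * y) w = la x (la y w)) /\ (forall w, la 1 w = w) /\
      (forall x y w, ra w (x * y) = ra (ra w x) y) /\ (forall w, ra w 1 = w) /\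
      (forall x y w, la x (ra w y) = ra (la x w) y) /\
      (klin d /\ (forall x y, d (x * y) = la x (d y) + ra (d x) y)) /\
      forall w, exists s : seq (H * H * H),
        w = \sum_(t <- s) la t.1.1 (ra (d t.1.2) t.2).

Definition left_covariant (cop : H -> seq (H * H)) (eps : H -> k)
    (Omega : lmodType k) (d : H -> Omega) : Prop :=
  exists Dl : Omega -> seq (H * Omega),
    [/\ tlin Dl,
        (forall a, tensor_eq (Dl (d a)) [seq (p.1, d p.2) | p <- cop a]) &
        (forall w, \sum_(p <- Dl w) eps p.1 *: p.2 = w)].

Definition right_H_hom (Omega : lmodType k) (ra : Omega -> H -> Omega)
    (X : Omega -> H) : Prop :=
  (forall w1 w2, X (w1 + w2) = X w1 + X w2) /\
  (forall w h, X (ra w h) = X w * h).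

Definition rho (Omega : lmodType k) (d : H -> Omega) (X : Omega -> H) : H -> H :=
  fun a => X (d a).

Definition alg_separates : Prop :=
  forall a b : H, a <> b -> exists phi : H -> k, alg_hom_k phi /\ phi a <> phi b.

End Hopf.

(** Condition (A) says that rho(X) is the right convolution a |-> a_1 f(a_2)
    with the functional f := eps o rho(X).  Such a convolution commutes with
    every left translation, because a left translation L satisfies
    Delta o L = (L (x) I) o Delta; this gives (A) => (B).  Conversely, for a
    character phi the left translation L_phi := (phi (x) I) o Delta satisfies
    g o L_phi = phi o (I (x) g) o Delta for every functional g; taking g = eps
    gives eps o L_phi = phi.  Applying eps to (B) for L_phi at a therefore
    yields phi(rho a) = phi(a_1 f(a_2)) for every character phi, and
    separation gives (A).  Only the linearity of rho(X) is used. *)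
From HB Require Import structures.
From mathcomp Require Import all_boot all_order all_algebra.
Import GRing.Theory.
Local Open Scope ring_scope.

Set Implicit Arguments.
Unset Strict Implicit.

Section LinearMaps.
Variable k : fieldType.
Implicit Types U V Z W : lmodType k.

Lemma klin0 U V (f : U -> V) : klin f -> f 0 = 0.
Proof.
move=> f_lin; have f00 := f_lin 1 0 0; rewrite !scale1r addr0 in f00.
by apply: (addrI (f 0)); rewrite addr0 -f00.
Qed.

Lemma klinD U V (f : U -> V) : klin f -> forall x y, f (x + y) = f x + f y.
Proof. by move=> f_lin x y; have := f_lin 1 x y; rewrite !scale1r. Qed.

Lemma klinZ U V (f : U -> V) : klin f -> forall c x, f (c *: x) = c *: f x.
Proof.
by move=> f_lin c x; rewrite -[c *: x]addr0 f_lin (klin0 f_lin) addr0.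
Qed.

Lemma klin_sum U V (f : U -> V) : klin f ->
  forall (I : Type) (s : seq I) (F : I -> U),
  f (\sum_(i <- s) F i) = \sum_(i <- s) f (F i).
Proof.
move=> f_lin I s F; elim: s => [|x s IHs].
  by rewrite !big_nil (klin0 f_lin).
by rewrite !big_cons (klinD f_lin) IHs.
Qed.

Lemma klin_comp U V W (g : V -> W) (f : U -> V) :
  klin g -> klin f -> klin (g \o f).
Proof. by move=> g_lin f_lin c x y /=; rewrite f_lin g_lin. Qed.

Lemma kform_klin U (f : U -> k) : kform f -> klin (f : U -> k^o).
Proof. by []. Qed.

Lemma kformZ U (f : U -> k) : kform f -> forall c x, f (c *: x) = c * f x.
Proof. by move/kform_klin/klinZ. Qed.

Lemma kform_sum U (f : U -> k) : kform f ->
  forall (I : Type) (s : seq I) (F : I -> U),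
  f (\sum_(i <- s) F i) = \sum_(i <- s) f (F i).
Proof. by move/kform_klin/klin_sum. Qed.

Lemma kform_comp U V (g : V -> k) (f : U -> V) :
  kform g -> klin f -> kform (g \o f).
Proof. by move=> g_form f_lin c x y /=; rewrite f_lin g_form. Qed.

Lemma tev_klin U V Z W (f : V -> Z -> W) (D : U -> seq (V * Z)) :
  bilin f -> tlin D -> klin (fun x => tev f (D x)).
Proof.
move=> f_bilin D_lin c x y.
rewrite (D_lin c x y _ f f_bilin) /tev big_cat big_map scaler_sumr.
by congr (_ + _); apply: eq_bigr => p _; rewrite (klinZ (f_bilin.1 _)).
Qed.

Lemma bilin_scale_form U (phi : U -> k) :
  kform phi -> bilin (fun x (y : U) => phi x *: y).
Proof.
move=> phi_form; split=> [y | x] c u v.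
  by rewrite phi_form scalerDl scalerA.
by rewrite scalerDr !scalerA mulrC.
Qed.

End LinearMaps.

Section Convolution.
Variables (k : fieldType) (H : algType k) (cop : H -> seq (H * H)).

Definition conv_right (f : H -> k) (a : H) : H :=
  \sum_(p <- cop a) f p.2 *: p.1.

Definition left_transl (phi : H -> k) (a : H) : H :=
  \sum_(p <- cop a) phi p.1 *: p.2.

Lemma left_translation_conv_right (f : H -> k) (L : H -> H) :
  kform f -> left_translation cop L ->
  forall a, conv_right f (L a) = L (conv_right f a).
Proof.
move=> f_form [L_lin _ _ L_cop] a.
have f_bilin : bilin (fun x y : H => f y *: x).
  split=> [y | x] c u v; first by rewrite scalerDr !scalerA mulrC.
  by rewrite f_form scalerDl scalerA.
rewrite /conv_right; have := L_cop a _ _ f_bilin; rewrite /tev => ->.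
rewrite big_map (klin_sum L_lin).
by apply: eq_bigr => p _; rewrite (klinZ L_lin).
Qed.

Lemma form_left_transl (phi f : H -> k) : kform phi -> kform f ->
  forall a, f (left_transl phi a) = phi (conv_right f a).
Proof.
move=> phi_form f_form a; rewrite /left_transl /conv_right.
rewrite (kform_sum f_form) (kform_sum phi_form).
by apply: eq_bigr => p _; rewrite (kformZ f_form) (kformZ phi_form) mulrC.
Qed.

Hypotheses (cop_lin : tlin cop)
  (cop_mul : forall x y, tensor_eq (cop (x * y))
                [seq (p.1 * q.1, p.2 * q.2) | p <- cop x, q <- cop y])
  (cop_one : tensor_eq (cop 1) [:: (1, 1)])
  (cop_coassoc : forall (W : lmodType k) (f : H -> H -> H -> W), trilin f ->
     forall a, \sum_(p <- cop a) \sum_(q <- cop p.1) f q.1 q.2 p.2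
             = \sum_(p <- cop a) \sum_(q <- cop p.2) f p.1 q.1 q.2).

Lemma left_transl_mul (phi : H -> k) : alg_hom_k phi ->
  forall x y, left_transl phi (x * y) = left_transl phi x * left_transl phi y.
Proof.
move=> [phi_form [phi_mul _]] x y.
rewrite /left_transl; have := cop_mul x y (bilin_scale_form phi_form).
rewrite /tev => ->.
rewrite big_allpairs_dep mulr_suml; apply: eq_bigr => p _.
rewrite mulr_sumr; apply: eq_bigr => q _ /=.
by rewrite phi_mul -scalerAl -scalerAr scalerA.
Qed.

Lemma left_transl_one (phi : H -> k) : alg_hom_k phi -> left_transl phi 1 = 1.
Proof.
move=> [phi_form [_ phi1]]; rewrite /left_transl.
have := cop_one (bilin_scale_form phi_form); rewrite /tev => ->.
by rewrite big_seq1 /= phi1 scale1r.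
Qed.

(* Coassociativity applied to the trilinear map x y z |-> phi(x) f(y, z). *)
Lemma cop_left_transl (phi : H -> k) : kform phi ->
  forall a, tensor_eq (cop (left_transl phi a))
                      [seq (left_transl phi p.1, p.2) | p <- cop a].
Proof.
move=> phi_form a W f [fl fr].
have tev_lin := tev_klin (conj fl fr) cop_lin.
have phif_trilin : trilin (fun x y z => phi x *: f y z).
  split; [|split] => [y z | x z | x y] c u v.
  - by rewrite phi_form scalerDl scalerA.
  - by rewrite fl scalerDr !scalerA mulrC.
  - by rewrite fr scalerDr !scalerA mulrC.
have tevZ c x : tev f (cop (c *: x)) = c *: tev f (cop x) := klinZ tev_lin c x.
have fZ c x y : f (c *: x) y = c *: f x y := klinZ (fl y) c x.
have fS y (I : Type) (s : seq I) F :
  f (\sum_(i <- s) F i) y = \sum_(i <- s) f (F i) y := klin_sum (fl y) s F.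
rewrite [in RHS]/tev big_map /left_transl (klin_sum tev_lin).
transitivity (\sum_(p <- cop a) \sum_(q <- cop p.2) phi p.1 *: f q.1 q.2).
  by apply: eq_bigr => p _; rewrite tevZ /tev scaler_sumr.
rewrite -(cop_coassoc phif_trilin); apply: eq_bigr => p _ /=.
by rewrite fS; apply: eq_bigr => q _; rewrite fZ.
Qed.

Lemma left_transl_left_translation (phi : H -> k) :
  alg_hom_k phi -> left_translation cop (left_transl phi).
Proof.
move=> phi_alg; split.
- exact: tev_klin (bilin_scale_form phi_alg.1) cop_lin.
- exact: left_transl_mul.
- exact: left_transl_one.
- exact: cop_left_transl phi_alg.1.
Qed.

End Convolution.

Lemma right_H_hom_klin (k : fieldType) (H : algType k) (Omega : lmodType k)
    (ra : Omega -> H -> Omega) (X : Omega -> H) :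
  (forall w, klin (ra w)) -> (forall w, ra w 1 = w) ->
  right_H_hom ra X -> klin X.
Proof.
move=> ra_lin ra1 [X_add X_ra] c x y.
rewrite X_add -{1}[x]ra1 -[c *: ra x 1](klinZ (ra_lin x)) X_ra.
by rewrite -scalerAr mulr1.
Qed.

Theorem mainTheorem11 (k : fieldType) (H : algType k)
    (cop : H -> seq (H * H)) (eps : H -> k)
    (Omega : lmodType k) (la : H -> Omega -> Omega) (ra : Omega -> H -> Omega)
    (d : H -> Omega) (X : Omega -> H) :
  is_hopf cop eps ->
  is_FODC la ra d ->
  left_covariant cop eps d ->
  right_H_hom ra X ->
  let condA := forall a : H,
      rho d X a = \sum_(p <- cop a) eps (rho d X p.2) *: p.1 in
  let condB := forall L : H -> H, left_translation cop L ->
      forall a : H, rho d X (L a) = L (rho d X a) in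
  (condA -> condB) /\ (alg_separates H -> condB -> condA).
Proof.
move=> [cop_lin [cop_mul [cop_one [cop_coassoc [eps_alg [_ [counit _]]]]]]].
move=> [[_ [_ ra_lin]] [_ [_ [_ [ra1 [_ [[d_lin _] _]]]]]]] _ X_hom /=.
have rho_lin : klin (rho d X) :=
  klin_comp (right_H_hom_klin ra_lin ra1 X_hom) d_lin.
have f_form : kform (eps \o rho d X) := kform_comp eps_alg.1 rho_lin.
split=> [condA L L_transl a | separates condB a].
  have conv_rho b : rho d X b = conv_right cop (eps \o rho d X) b := condA b.
  by rewrite !conv_rho (left_translation_conv_right f_form L_transl).
have [// | /eqP /separates [phi [phi_alg []]]] :=
  eqVneq (rho d X a) (conv_right cop (eps \o rho d X) a).
have L_transl :=
  left_transl_left_translation cop_lin cop_mul cop_one cop_coassoc phi_alg.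
rewrite -(form_left_transl cop phi_alg.1 f_form) /= (condB _ L_transl).
by rewrite (form_left_transl cop phi_alg.1 eps_alg.1) /conv_right counit.
Qed.
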